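(* Let $\mathfrak{F}$ be any saturated formation of finite groups such that every group in $\mathfrak{F}$ is soluble and $\mathfrak{U}\subseteq\mathfrak{F}$, where $\mathfrak{U}$ is the class of all finite supersoluble groups. Then there exist a finite group $G$ and a normal subgroup $H$ of $G$ such that $G/H\in\mathfrak{F}$ and, for every maximal subgroup $M$ of $G$, the index $|\tilde{\mathrm{F}}(H):\tilde{\mathrm{F}}(H)\cap M|$ is equal to $1$ or to a prime, but $G\notin\mathfrak{F}$. In particular, this holds for $\mathfrak{F}=\mathfrak{U}$.
   Context: All groups are finite. A formation is a class of groups closed under homomorphic images and such that if $G/N_1$ and $G/N_2$ lie in it then so does $G/(N_1\cap N_2)$; it is saturated if $G/\Phi(G)\in\mathfrak{F}$ implies $G\in\mathfrak{F}$, where $\Phi(G)$ is the Frattini subgroup. For a group $X$, $\tilde{\mathrm{F}}(X)$ denotes the subgroup of $X$ containing $\Phi(X)$ defined by $\tilde{\mathrm{F}}(X)/\Phi(X)=\mathrm{Soc}(X/\Phi(X))$, the socle (product of all minimal normal subgroups) of $X/\Phi(X)$. *)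

From mathcomp Require Import all_boot all_fingroup all_solvable.
Set Implicit Arguments. Unset Strict Implicit. Unset Printing Implicit Defensive.
Local Open Scope group_scope.

Definition group_class := forall gT : finGroupType, {group gT} -> Prop.

Definition iso_closed (F : group_class) : Prop :=
  forall (gT hT : finGroupType) (G : {group gT}) (H : {group hT}),
    F gT G -> G \isog H -> F hT H.

Definition formation (F : group_class) : Prop :=
  [/\ iso_closed F,
      (forall (gT : finGroupType) (G N : {group gT}),
          F gT G -> N <| G -> F _ (G / N)%G) &
      (forall (gT : finGroupType) (G N1 N2 : {group gT}),
          N1 <| G -> N2 <| G -> F _ (G / N1)%G -> F _ (G / N2)%G ->
          F _ (G / (N1 :&: N2))%G)].

Definition saturated (F : group_class) : Prop :=
  forall (gT : finGroupType) (G : {group gT}), F _ (G / 'Phi(G))%G -> F gT G.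

Definition supersoluble (gT : finGroupType) (G : {group gT}) : Prop :=
  exists s : seq {group gT},
    path (fun H K : {group gT} =>
            [&& H <| G, K <| G, H \subset K & cyclic (K / H)]) 1%G s
    /\ last 1%G s = G.

Definition socle (gT : finGroupType) (G : {group gT}) : {set gT} :=
  <<\bigcup_(N : {group gT} | minnormal N G && (N \subset G)) N>>.

Definition Ftilde (gT : finGroupType) (X : {group gT}) : {set gT} :=
  coset 'Phi(X) @*^-1 socle (X / 'Phi(X))%G.

From HB Require Import structures.
From mathcomp Require Import all_boot all_fingroup all_solvable.
Set Implicit Arguments. Unset Strict Implicit. Unset Printing Implicit Defensive.
Local Open Scope group_scope.

(* Let U = F_2^6 be the permutation module of A_6, E its even-weight submodule
   and Z the constants, and take G = U >< A_6 and H = E >< A_6. Then G/H has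
   order 2, so it is supersoluble and lies in F, while G is not soluble, so it
   is not in F.
   Every A_6-submodule of U lies in Z or contains E, and A_6 acts faithfully on
   E/Z. Hence Phi(H) <= Z and every minimal normal subgroup of H/Phi(H) lies in
   E/Phi(H), so F~(H) <= E. A maximal subgroup M of G not containing E would
   give U = E(U :&: M) with U :&: M a submodule, which is impossible. So F~(H)
   lies in every maximal subgroup of G and all the indices are 1. *)

Lemma cyclic_supersoluble (gT : finGroupType) (G : {group gT}) :
  cyclic G -> supersoluble G.
Proof.
move=> cycG; exists [:: G]; split=> //=.
by rewrite normal1 normal_refl sub1G quotient_cyclic.
Qed.

Section IndexTwoExtension.

Variables (gT : finGroupType) (U K E Z : {group gT}).
Hypotheses (cUU : abelian U) (nUK : K \subset 'N(U)) (tiUK : U :&: K = 1)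
  (sEU : E \subset U) (nEK : K \subset 'N(E)) (iUE : #|U : E| = 2)
  (sZE : Z \subset E) (not_sEZ : ~~ (E \subset Z)).
Hypothesis sub_or_sup :
  forall W : {group gT}, W \subset U -> K \subset 'N(W) -> W \subset Z \/ E \subset W.
Hypothesis faithful :
  forall k, k \in K -> (forall v, v \in E -> [~ k, v] \in Z) -> k = 1.

Local Notation G := (U <*> K)%G.
Local Notation H := (E <*> K)%G.

Let nEU : U \subset 'N(E). Proof. exact: sub_abelian_norm. Qed.
Let nEG : G \subset 'N(E). Proof. by rewrite join_subG nEU. Qed.
Let sEH : E \subset H. Proof. exact: joing_subl. Qed.
Let sKH : K \subset H. Proof. exact: joing_subr. Qed.
Let nEH : H \subset 'N(E). Proof. by rewrite join_subG (subset_trans sEU). Qed.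

Lemma index_join_ext : #|G : H| = 2.
Proof.
have tiEK : E :&: K = 1 by apply/trivgP; rewrite -tiUK setSI.
have sHG : H \subset G by rewrite genS ?setSU.
rewrite -divgS // /= !norm_joinEr // !TI_cardMg // -(Lagrange sEU) iUE.
by rewrite mulnAC mulKn // muln_gt0 !cardG_gt0.
Qed.

Lemma normal_join_ext : H <| G.
Proof. by rewrite index2_normal ?index_join_ext ?genS ?setSU. Qed.

Lemma cent_mod_sub_ext (A : {set gT}) :
  A \subset H -> [~: A, E] \subset Z -> A \subset E.
Proof.
move=> sAH sRZ; apply/subsetP=> x Ax.
have := subsetP sAH x Ax; rewrite /= norm_joinEr // => /mulsgP[e k Ee Kk def_x].
rewrite def_x groupMl //; suff -> : k = 1 by [].
apply: faithful => // v Ev; have := subsetP sRZ _ (mem_commg Ax Ev).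
have /commgP/eqP cev : commute e v by apply: (centsP (abelianS sEU cUU)).
by rewrite def_x commMgJ cev conj1g mul1g.
Qed.

Lemma Phi_join_ext_sub : 'Phi(H) \subset Z.
Proof.
have nPH : H \subset 'N('Phi(H)) := normal_norm (Phi_normal H).
have sPE_Z : 'Phi(H) :&: E \subset Z.
  have [] // := @sub_or_sup ('Phi(H) :&: E)%G.
  - by rewrite subIset // sEU orbT.
  - by rewrite normsI // (subset_trans sKH).
  rewrite subsetI subxx andbT => sEP.
  have defK : <<K>> = H.
    apply: Phi_nongen; apply/eqP; rewrite eqEsubset join_subG Phi_sub sKH /=.
    by rewrite genS ?setSU.
  have sEK : E \subset K by rewrite -(genGid K) defK.
  case/negP: not_sEZ; apply: subset_trans (sub1G Z).
  by rewrite -tiUK subsetI sEU.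
have sPE : 'Phi(H) \subset E.
  apply: cent_mod_sub_ext; first exact: Phi_sub.
  apply: subset_trans sPE_Z; apply: commg_subI; rewrite subsetI subxx /=.
    exact: subset_trans (Phi_sub H) nEH.
  exact: subset_trans sEH nPH.
by rewrite -(setIidPl sPE).
Qed.

Lemma Ftilde_join_ext_sub : Ftilde H \subset E.
Proof.
set P := 'Phi(H); have sPE : P \subset E := subset_trans Phi_join_ext_sub sZE.
have nPH : H \subset 'N(P) := normal_norm (Phi_normal H).
have nPE : E \subset 'N(P) := subset_trans sEH nPH.
suff sSE : socle (H / P)%G \subset E / P.
  apply: subset_trans (morphpreS _ sSE) _.
  by rewrite quotientK // mul_subG.
rewrite /socle gen_subG; apply/bigcupsP=> N /andP[minN sNHP].
have [/andP[_ nNHP] minN_sub] := mingroupP minN.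
have nEPHP : H / P \subset 'N(E / P) := morphim_norms _ nEH.
have [tiNE | ntNE] := eqVneq (N :&: E / P) 1.
  (* Then N centralises E / P, so its preimage lies in E by faithfulness. *)
  set X := coset P @*^-1 N.
  have sXH : X \subset H by rewrite -(mulSGid (Phi_sub H)) -quotientK // morphpreS.
  have nPX : X \subset 'N(P) := subset_trans sXH nPH.
  rewrite -(cosetpreK N) quotientS // cent_mod_sub_ext //.
  apply: subset_trans Phi_join_ext_sub.
  rewrite -quotient_cents2 // cosetpreK; apply/commG1P/trivgP; rewrite -tiNE.
  apply: commg_subI; rewrite subsetI subxx /=.
    exact: subset_trans sNHP nEPHP.
  exact: subset_trans (quotientS _ sEH) nNHP.
have <- : N :&: E / P = N.
  apply: minN_sub; rewrite ?subsetIl // ntNE /=.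
  by rewrite normsI.
exact: subsetIr.
Qed.

Lemma maximal_join_ext_sub (M : {group gT}) : maximal M G -> E \subset M.
Proof.
move=> /maxgroupP[/proper_sub sMG maxM]; apply: contraT => not_sEM.
have sUG : U \subset G := joing_subl U K.
have nUG : G \subset 'N(U) by rewrite join_subG normG.
have defEM : E * M = G.
  apply/eqP; rewrite eqEproper mul_subG ?(subset_trans sEU) //= -norm_joinEr //.
    by apply: contra not_sEM => /maxM <-; rewrite ?joing_subl ?joing_subr.
  exact: subset_trans sMG nEG.
have nMU_G : G \subset 'N(M :&: U).
  rewrite -defEM mul_subG ?(subset_trans sEU (sub_abelian_norm cUU (subsetIr M U))) //.
  by rewrite normsI ?normG ?(subset_trans sMG).
have [sMUZ | sEMU] := sub_or_sup (subsetIr M U) (subset_trans (joing_subr U K) nMU_G).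
  have sUE : U \subset E.
    by rewrite -(setIidPr sUG) -defEM -group_modl // mul_subG ?(subset_trans sMUZ).
  by move: iUE; rewrite -indexgI (setIidPl sUE) indexgg.
by case/negP: not_sEM; apply: subset_trans sEMU (subsetIl M U).
Qed.

Lemma join_ext_spec :
  [/\ H <| G, #|G : H| = 2 & forall M : {group gT}, maximal M G -> Ftilde H \subset M].
Proof.
split; [exact: normal_join_ext | exact: index_join_ext | move=> M maxM].
exact: subset_trans Ftilde_join_ext_sub (maximal_join_ext_sub maxM).
Qed.

End IndexTwoExtension.

Section SymmetricDifference.

Variable T : finType.
Implicit Types (A B C : {set T}) (g : {perm T}).

Definition symdiff A B : {set T} := [set x | (x \in A) (+) (x \in B)].

Lemma symdiffA : associative symdiff.
Proof. by move=> A B C; apply/setP=> x; rewrite !inE addbA. Qed.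

Lemma symdiffC : commutative symdiff.
Proof. by move=> A B; apply/setP=> x; rewrite !inE addbC. Qed.

Lemma symdiff0s A : symdiff set0 A = A.
Proof. by apply/setP=> x; rewrite !inE. Qed.

Lemma symdiffs0 A : symdiff A set0 = A.
Proof. by rewrite symdiffC symdiff0s. Qed.

Lemma symdiffss A : symdiff A A = set0.
Proof. by apply/setP=> x; rewrite !inE addbb. Qed.

Lemma symdiffK A : involutive (symdiff A).
Proof. by move=> B; rewrite symdiffA symdiffss symdiff0s. Qed.

Lemma symdiff_eq0 A B : (symdiff A B == set0) = (A == B).
Proof.
apply/eqP/eqP=> [AB0 | ->]; last exact: symdiffss.
by rewrite -(symdiffK A B) AB0 symdiffs0.
Qed.

Lemma odd_symdiff A B : odd #|symdiff A B| = odd #|A| (+) odd #|B|.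
Proof.
have AB_U : symdiff A B = (A :\: B) :|: (B :\: A).
  by apply/setP=> x; rewrite !inE; case: (x \in A); case: (x \in B).
have AB_I : (A :\: B) :&: (B :\: A) = set0.
  by apply/setP=> x; rewrite !inE; case: (x \in A); case: (x \in B).
have cardAB : #|symdiff A B| = #|A :\: B| + #|B :\: A|.
  by rewrite AB_U -cardsUI AB_I cards0 addn0.
rewrite cardAB -(cardsID B A) -(cardsID A B) [B :&: A]setIC !oddD.
by case: (odd #|A :&: B|); case: (odd #|A :\: B|); case: (odd #|B :\: A|).
Qed.

Lemma card_symdiff_le A B : #|symdiff A B| <= #|A| + #|B|.
Proof.
apply: leq_trans (leq_card_setU A B); apply: subset_leq_card.
by apply/subsetP=> x; rewrite !inE; case: (x \in A).
Qed.

Lemma imset_symdiff g A B : g @: symdiff A B = symdiff (g @: A) (g @: B).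
Proof.
by apply/setP=> x; rewrite -[x](permKV g) inE !mem_imset ?inE //; exact: perm_inj.
Qed.

Definition even_sets : {set {set T}} := [set A : {set T} | ~~ odd #|A|].

Lemma card_even_sets (i0 : T) : (#|even_sets| * 2 = #|[set: {set T}]|)%N.
Proof.
have oddC : ~: even_sets = symdiff [set i0] @^-1: even_sets.
  by apply/setP=> A; rewrite !inE odd_symdiff cards1 negbK.
have card_oddC : #|~: even_sets| = #|even_sets|.
  by rewrite oddC card_preimset //; exact: can_inj (symdiffK _).
by rewrite cardsT -(cardsC even_sets) card_oddC muln2 addnn.
Qed.

End SymmetricDifference.

Section AltInvariantSets.

Variables (T : finType) (X : pred {set T}).
Hypothesis T_gt3 : 3 < #|T|.
Hypotheses (X0 : X set0) (X_symdiff : forall A B, X A -> X B -> X (symdiff A B))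
  (X_alt : forall A g, g \in 'Alt_T -> X A -> X (g @: A)).

Lemma card_set3_le (p q r : T) : #|[set p; q; r]| <= 3.
Proof.
apply: leq_trans (leq_card_setU _ _) _.
by rewrite cards2 cards1; case: (p != q).
Qed.

Lemma exists_neq3 (p q r : T) : exists t, [&& t != p, t != q & t != r].
Proof.
have /card_gt0P[t] : 0 < #|~: [set p; q; r]|.
  rewrite -(ltn_add2l #|[set p; q; r]|) cardsC addn0.
  exact: leq_ltn_trans (card_set3_le p q r) T_gt3.
by rewrite !inE !negb_or -andbA; exists t.
Qed.

Let alt_tpermM (a b c : T) : a != b -> a != c -> tperm a b * tperm a c \in 'Alt_T.
Proof. by move=> ab ac; rewrite Alt_even odd_permM !odd_tperm ab ac. Qed.

Lemma alt_closed_pair_move (a b c : T) :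
  b != a -> c != a -> X [set a; b] -> X [set a; c].
Proof.
move=> ba ca Xab; have [<- // | bc] := eqVneq b c.
have [t /and3P[ta tb tc]] := exists_neq3 a b c.
have g_even : tperm b c * tperm b t \in 'Alt_T by rewrite alt_tpermM // eq_sym.
have := X_alt g_even Xab; rewrite imsetU !imset_set1 !permM.
by rewrite (tpermD ba ca) (tpermD ba ta) tpermL (tpermD bc tc).
Qed.

Lemma alt_closed_pairs (p q r s : T) : p != q -> r != s -> X [set p; q] -> X [set r; s].
Proof.
move=> pq rs Xpq; rewrite eq_sym in pq.
have [erp | rp] := eqVneq r p.
  by rewrite erp in rs *; apply: alt_closed_pair_move Xpq; rewrite // eq_sym.
have Xrp : X [set r; p] by rewrite setUC; apply: alt_closed_pair_move Xpq.
by apply: alt_closed_pair_move Xrp; rewrite // eq_sym.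
Qed.

Lemma alt_closed_pair S : X S -> S != set0 -> S != setT ->
  exists p q, p != q /\ X [set p; q].
Proof.
move=> XS /set0Pn[i Si]; rewrite -subTset => /subsetPn[j _ Sj].
have [k /and3P[ki kj _]] := exists_neq3 i j j.
have ij : i != j by apply: contraNneq Sj => <-.
(* For the 3-cycle g = (i j k), S + g(S) is an even set supported on {i, j, k}
   and containing j = g(i), hence a pair. *)
set g := tperm i j * tperm i k.
have g_even : g \in 'Alt_T by rewrite alt_tpermM // eq_sym.
set D := symdiff S (g @: S).
have XD : X D := X_symdiff XS (X_alt g_even XS).
have D_even : ~~ odd #|D| by rewrite odd_symdiff card_imset ?addbb //; exact: perm_inj.
have Dj : j \in D.
  have gi : g i = j by rewrite permM tpermL tpermD // eq_sym.
  by rewrite inE -{2}gi mem_imset ?Si ?(negbTE Sj) //; exact: perm_inj.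
have sD : D \subset [set i; j; k].
  apply/subsetP=> x; apply: contraLR; rewrite !inE => /norP[/norP[xi xj] xk].
  have gx : g x = x by rewrite permM !tpermD // eq_sym.
  by rewrite -{2}gx mem_imset ?addbb //; exact: perm_inj.
have : #|D| == 2.
  have := leq_trans (subset_leq_card sD) (card_set3_le i j k).
  have D_pos : 0 < #|D| by apply/card_gt0P; exists j.
  by move: D_pos D_even; case: #|D| => [|[|[|[|n]]]].
by case/cards2P=> p [q [pq defD]]; exists p, q; rewrite -defD.
Qed.

Lemma alt_closed_even S : X S -> S != set0 -> S != setT ->
  forall A : {set T}, ~~ odd #|A| -> X A.
Proof.
move=> XS nS0 nST; have [p [q [pq Xpq]]] := alt_closed_pair XS nS0 nST.
move=> A; have [n] := ubnP #|A|; elim: n A => // n IHn A ltAn evA.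
have [-> // | [i Ai]] := set_0Vmem A.
have /card_gt0P[j] : 0 < #|A :\ i|.
  by move: evA; rewrite (cardsD1 i A) Ai; case: #|A :\ i|.
rewrite !inE => /andP[ji Aj].
set A' := symdiff A [set i; j].
have <- : symdiff [set i; j] A' = A by rewrite symdiffC -symdiffA symdiffss symdiffs0.
apply: X_symdiff; first by apply: alt_closed_pairs Xpq; rewrite // eq_sym.
have ltA'A : #|A'| < #|A|.
  apply: proper_card; apply/properP; split; last by exists i; rewrite ?inE ?Ai ?eqxx.
  apply/subsetP=> x; apply: contraLR => nAx; rewrite !inE (negbTE nAx) /=.
  by apply/norP; split; apply: contraNneq nAx => ->.
apply: IHn; first exact: leq_trans ltA'A _.
by rewrite odd_symdiff (negbTE evA) cards2 eq_sym ji.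
Qed.

End AltInvariantSets.

Section Wreath.

Variable T : finType.

(* The wreath product F_2^T >< Sym(T): (A, g) has base component the
   indicator vector of A. *)
Definition wreath := ({set T} * {perm T})%type.
HB.instance Definition _ := Finite.on wreath.

Definition wreath_mul (x y : wreath) : wreath := (symdiff (y.2 @: x.1) y.1, x.2 * y.2).
Definition wreath_one : wreath := (set0, 1).
Definition wreath_inv (x : wreath) : wreath := (x.2^-1 @: x.1, x.2^-1).

Lemma wreath_mulA : associative wreath_mul.
Proof.
move=> [A g] [B h] [C k]; rewrite /wreath_mul /= mulgA symdiffA imset_symdiff.
by rewrite -imset_comp (eq_imset _ (permM h k)).
Qed.

Lemma wreath_mul1 : left_id wreath_one wreath_mul.
Proof. by move=> [A g]; rewrite /wreath_mul /= imset0 symdiff0s mul1g. Qed.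

Lemma wreath_mulV : left_inverse wreath_one wreath_inv wreath_mul.
Proof.
move=> [A g]; rewrite /wreath_mul /= mulVg -imset_comp.
by rewrite (eq_imset _ (permKV g)) imset_id symdiffss.
Qed.

HB.instance Definition _ := Finite_isGroup.Build wreath wreath_mulA wreath_mul1 wreath_mulV.

Lemma wreath_mulE (x y : wreath) : x * y = wreath_mul x y. Proof. by []. Qed.
Lemma wreath_invE (x : wreath) : x^-1 = wreath_inv x. Proof. by []. Qed.

Definition wr_vec (A : {set T}) : wreath := (A, 1).
Definition wr_top (g : {perm T}) : wreath := (set0, g).

Lemma wr_vec_inj : injective wr_vec. Proof. by move=> A B []. Qed.

Lemma mem_wr_vec (S : {set {set T}}) A : (wr_vec A \in wr_vec @: S) = (A \in S).
Proof. exact: mem_imset wr_vec_inj. Qed.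

Lemma wr_vecM A B : wr_vec A * wr_vec B = wr_vec (symdiff A B).
Proof. by rewrite wreath_mulE /wreath_mul /= imset_perm1 mulg1. Qed.

Lemma wr_vecJ A g : wr_vec A ^ wr_top g = wr_vec (g @: A).
Proof.
rewrite /conjg !wreath_mulE wreath_invE /wreath_mul /wreath_inv /=.
by rewrite !imset0 symdiff0s symdiffs0 mul1g mulVg.
Qed.

Lemma wr_topM : {in [set: {perm T}] &, {morph wr_top : g h / g * h}}.
Proof. by move=> g h _ _; rewrite wreath_mulE /wreath_mul /= imset0 symdiff0s. Qed.
Canonical wr_top_morphism := Morphism wr_topM.

Lemma wr_vec_group_set (S : {set {set T}}) :
  set0 \in S -> {in S &, forall A B, symdiff A B \in S} -> group_set (wr_vec @: S).
Proof.
move=> S0 S_symdiff; apply/group_setP; split; first exact: imset_f.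
by move=> _ _ /imsetP[A SA ->] /imsetP[B SB ->]; rewrite wr_vecM imset_f ?S_symdiff.
Qed.

Definition wr_base := wr_vec @: [set: {set T}].
Definition wr_even := wr_vec @: even_sets T.
Definition wr_diag := wr_vec @: [set set0; setT].
Definition wr_alt := wr_top @* 'Alt_T.

Lemma wr_base_group_set : group_set wr_base.
Proof. by apply: wr_vec_group_set => [|A B _ _]; rewrite inE. Qed.
Canonical wr_base_group := group wr_base_group_set.

Lemma wr_even_group_set : group_set wr_even.
Proof.
apply: wr_vec_group_set => [|A B]; rewrite !inE ?cards0 // odd_symdiff.
by move=> /negbTE-> /negbTE->.
Qed.
Canonical wr_even_group := group wr_even_group_set.

Lemma wr_diag_group_set : group_set wr_diag.
Proof.
apply: wr_vec_group_set => [|A B]; rewrite !inE ?eqxx //.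
by case/orP=> /eqP-> /orP[] /eqP->; rewrite ?symdiff0s ?symdiffs0 ?symdiffss !eqxx ?orbT.
Qed.
Canonical wr_diag_group := group wr_diag_group_set.

Lemma wr_vecV A : (wr_vec A)^-1 = wr_vec A.
Proof. by rewrite wreath_invE /wreath_inv /= invg1 imset_perm1. Qed.

Lemma wr_top_alt g : g \in 'Alt_T -> wr_top g \in wr_alt.
Proof. exact: mem_morphim (in_setT g). Qed.

Lemma wr_alt_norm (S : {set {set T}}) :
    {in 'Alt_T & S, forall (g : {perm T}) (A : {set T}), g @: A \in S} ->
  wr_alt \subset 'N(wr_vec @: S).
Proof.
move=> S_alt; apply/subsetP=> _ /morphimP[g _ Ag ->]; rewrite inE.
by apply/subsetP=> _ /imsetP[_ /imsetP[A SA ->] ->]; rewrite wr_vecJ imset_f ?S_alt.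
Qed.

Lemma wr_base_abelian : abelian wr_base.
Proof.
apply/centsP=> _ /imsetP[A _ ->] _ /imsetP[B _ ->].
by rewrite /commute !wr_vecM symdiffC.
Qed.

Lemma wr_alt_norm_base : wr_alt \subset 'N(wr_base).
Proof. by apply: wr_alt_norm => g A _ _; rewrite inE. Qed.

Lemma wr_alt_norm_even : wr_alt \subset 'N(wr_even).
Proof. by apply: wr_alt_norm => g A _; rewrite !inE card_imset //; exact: perm_inj. Qed.

Lemma wr_base_alt_TI : wr_base :&: wr_alt = 1.
Proof.
apply/trivgP/subsetP=> _ /setIP[/imsetP[A _ ->] /morphimP[g _ _ [-> _]]].
exact: group1.
Qed.

Lemma wr_even_sub_base : wr_even \subset wr_base.
Proof. exact: imsetS (subsetT _). Qed.

Lemma index_wr_even_base : 0 < #|T| -> #|wr_base : wr_even| = 2.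
Proof.
case/card_gt0P=> i0 _; rewrite -divgS ?wr_even_sub_base //= !(card_imset _ wr_vec_inj).
rewrite -(card_even_sets i0) mulKn //.
by apply/card_gt0P; exists set0; rewrite inE cards0.
Qed.

Hypotheses (T_gt4 : 4 < #|T|) (T_even : ~~ odd #|T|).
Let T_gt3 : 3 < #|T| := ltnW T_gt4.

Lemma wr_diag_sub_even : wr_diag \subset wr_even.
Proof.
apply: imsetS; apply/subsetP=> A; rewrite !inE.
by case/orP=> /eqP->; rewrite ?cards0 ?cardsT.
Qed.

Lemma wr_even_not_sub_diag : ~~ (wr_even \subset wr_diag).
Proof.
have /card_gt0P[i _] : 0 < #|T| := leq_ltn_trans (leq0n 4) T_gt4.
have [j /and3P[ji _ _]] := exists_neq3 T_gt3 i i i.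
have [k /and3P[ki kj _]] := exists_neq3 T_gt3 i j j.
apply/subsetPn; exists (wr_vec [set i; j]).
  by rewrite imset_f // inE cards2 eq_sym ji.
rewrite mem_wr_vec !inE.
apply/norP; split; apply/eqP=> /setP; first by move/(_ i); rewrite !inE eqxx.
by move/(_ k); rewrite !inE (negbTE ki) (negbTE kj).
Qed.

Lemma wr_base_invariant (W : {group wreath}) :
  W \subset wr_base -> wr_alt \subset 'N(W) -> W \subset wr_diag \/ wr_even \subset W.
Proof.
move=> sWU nWK; pose X := [pred A | wr_vec A \in W].
have X0 : X set0 := group1 W.
have X_symdiff A B : X A -> X B -> X (symdiff A B) by rewrite !inE -wr_vecM; apply: groupM.
have X_alt A g : g \in 'Alt_T -> X A -> X (g @: A).
  by move=> Ag; rewrite !inE -wr_vecJ memJ_norm // (subsetP nWK) ?wr_top_alt.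
have [sWZ | /subsetPn[x Wx notZx]] := boolP (W \subset wr_diag); [by left | right].
have /imsetP[S _ def_x] := subsetP sWU x Wx.
rewrite def_x in Wx notZx; move: notZx; rewrite mem_wr_vec !inE.
case/norP=> nS0 nST; apply/subsetP=> _ /imsetP[A evA ->].
by apply: (alt_closed_even T_gt3 X0 X_symdiff X_alt Wx nS0 nST); rewrite inE in evA.
Qed.

Lemma wr_alt_faithful k : k \in wr_alt ->
  (forall v, v \in wr_even -> [~ k, v] \in wr_diag) -> k = 1.
Proof.
case/morphimP=> g _ Ag -> centZ; suff -> : g = 1 by [].
have fix_pair i j : i != j -> g @: [set i; j] = [set i; j].
  move=> ij; have evA : wr_vec [set i; j] \in wr_even by rewrite imset_f // inE cards2 ij.
  move/centZ: evA; rewrite commgEr wr_vecV wr_vecJ wr_vecM mem_wr_vec !inE.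
  case/orP=> /eqP gA; first by apply/eqP; rewrite -symdiff_eq0 gA.
  have := card_symdiff_le (g @: [set i; j]) [set i; j].
  rewrite gA cardsT card_imset ?cards2 ?ij; last exact: perm_inj.
  by rewrite leqNgt T_gt4.
apply/permP=> i; rewrite perm1.
have [j /and3P[ji _ _]] := exists_neq3 T_gt3 i i i.
have [l /and3P[li lj _]] := exists_neq3 T_gt3 i j j.
have gi_in m : m != i -> g i \in [set i; m].
  by move=> mi; rewrite -(fix_pair i m) ?imset_f ?inE ?eqxx // eq_sym.
move: (gi_in j ji) (gi_in l li); rewrite !inE.
case: eqP => // _ /= /eqP gi_j /eqP gi_l.
by case/eqP: lj; rewrite -gi_j -gi_l.
Qed.

Lemma wr_alt_nonsolvable : ~~ solvable wr_alt.
Proof.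
rewrite injm_sol ?subsetT ?solvable_AltF //.
by apply/injmP=> g h _ _ [].
Qed.

Lemma wreath_extension :
  [/\ wr_even <*> wr_alt <| wr_base <*> wr_alt,
      #|wr_base <*> wr_alt : wr_even <*> wr_alt| = 2,
      forall M : {group wreath}, maximal M (wr_base <*> wr_alt) ->
        Ftilde (wr_even <*> wr_alt)%G \subset M
    & ~~ solvable (wr_base <*> wr_alt)].
Proof.
have T_gt0 : 0 < #|T| := leq_ltn_trans (leq0n 4) T_gt4.
have [nsHG iGH sFM] := join_ext_spec wr_base_abelian wr_alt_norm_base wr_base_alt_TI
  wr_even_sub_base wr_alt_norm_even (index_wr_even_base T_gt0) wr_diag_sub_even
  wr_even_not_sub_diag wr_base_invariant wr_alt_faithful.
split=> //; apply: contra wr_alt_nonsolvable.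
exact: solvableS (joing_subr _ _).
Qed.

End Wreath.

Theorem theorem1 (F : group_class) :
  formation F -> saturated F ->
  (forall (gT : finGroupType) (G : {group gT}), F gT G -> solvable G) ->
  (forall (gT : finGroupType) (G : {group gT}), supersoluble G -> F gT G) ->
  exists (gT : finGroupType) (G H : {group gT}),
    [/\ H <| G,
        F _ (G / H)%G,
        (forall M : {group gT}, maximal M G ->
           #|Ftilde H : Ftilde H :&: M| = 1%N \/ prime #|Ftilde H : Ftilde H :&: M|)
      & ~ F gT G].
Proof.
move=> _ _ F_solvable F_supersoluble.
have := @wreath_extension 'I_6; rewrite card_ord => /(_ isT isT)[nsHG iGH sFM not_solG].
exists (wreath 'I_6), (wr_base _ <*> wr_alt _)%G, (wr_even _ <*> wr_alt _)%G.
split=> //.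
- apply/F_supersoluble/cyclic_supersoluble/prime_cyclic.
  by rewrite card_quotient ?normal_norm // iGH.
- by move=> M /sFM/setIidPl->; left; rewrite indexgg.
- by move/F_solvable; apply/negP.
Qed.
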